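(* Let $\mathbb{F}$ be a field of characteristic $2$, $V$ a finite-dimensional $\mathbb{F}$-vector space and $b$ a non-degenerate symmetric bilinear form on $V$. Let $x$ be a non-zero vector of $V$ with $b(x,x)=0$, and let $u$ be a $b$-alternating endomorphism of $V$. The following are equivalent: (i) $u(x)=0$ and $u(\{x\}^\perp) \subset \mathbb{F}x$; (ii) there exists $y \in \{x\}^\perp$ such that $u = x\wedge_b y$. Moreover, if these conditions hold then $u$ is nilpotent.
   Context: An endomorphism $u$ of $V$ is $b$-alternating if the bilinear form $(z,w)\mapsto b(z,u(w))$ is alternating (vanishes on all pairs $(z,z)$). $\{x\}^\perp = \{z\in V : b(x,z)=0\}$. For $x,y\in V$, $x \wedge_b y$ is the endomorphism $z \mapsto b(y,z)\,x - b(x,z)\,y$. *)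

From HB Require Import structures.
From mathcomp Require Import all_boot all_algebra.
Set Implicit Arguments. Unset Strict Implicit. Unset Printing Implicit Defensive.
Import GRing.Theory.
Local Open Scope ring_scope.

Definition bilinear_bform (F : fieldType) (V : vectType F) (b : V -> V -> F) : Prop :=
  (forall (a : F) (x1 x2 y : V), b (a *: x1 + x2) y = a * b x1 y + b x2 y) /\
  (forall (a : F) (x y1 y2 : V), b x (a *: y1 + y2) = a * b x y1 + b x y2).

Definition symmetric_bform (F : fieldType) (V : vectType F) (b : V -> V -> F) : Prop :=
  forall x y : V, b x y = b y x.

Definition nondegenerate_bform (F : fieldType) (V : vectType F) (b : V -> V -> F) : Prop :=
  forall x : V, (forall y : V, b x y = 0) -> x = 0.

Definition b_alternating (F : fieldType) (V : vectType F) (b : V -> V -> F)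
  (u : 'End(V)) : Prop :=
  forall z : V, b z (u z) = 0.

Definition orth (F : fieldType) (V : vectType F) (b : V -> V -> F) (x : V) : pred V :=
  fun z => b x z == 0.

Definition wedge_b (F : fieldType) (V : vectType F) (b : V -> V -> F) (x y : V) : V -> V :=
  fun z => b y z *: x - b x z *: y.

Definition nilpotent_end (F : fieldType) (V : vectType F) (u : 'End(V)) : Prop :=
  exists k : nat, forall z : V, iter k u z = 0.

(** Polarizing [b(z, u z) = 0] makes [(z, w) |-> b(z, u w)] skew, so [u x = 0]
    forces [Im u] into [{x}^perp]; hence [u^3 = 0] under (i).  Conversely, pick
    [w] with [b(x, w) = 1] and split [z = z' + b(x, z) w] with [z'] in [{x}^perp];
    then [u z' = c x], and skewness identifies [c] with [b(w, u z) = -b(u w, z)],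
    which is exactly [u = x /\_b (- u w)]. *)

From HB Require Import structures.
From mathcomp Require Import all_boot all_algebra.
From Stdlib Require Import Classical.
Import GRing.Theory.
Local Open Scope ring_scope.
Set Implicit Arguments. Unset Strict Implicit. Unset Printing Implicit Defensive.

Section BilinearForm.
Variables (F : fieldType) (V : vectType F) (b : V -> V -> F).
Hypothesis hbil : bilinear_bform b.

Lemma bformDl z1 z2 y : b (z1 + z2) y = b z1 y + b z2 y.
Proof. by have := hbil.1 1 z1 z2 y; rewrite scale1r mul1r. Qed.

Lemma bform0l y : b 0 y = 0.
Proof. by have := bformDl 0 0 y; rewrite addr0 -{1}[b 0 y]addr0 => /addrI/esym. Qed.

Lemma bformZl a z y : b (a *: z) y = a * b z y.
Proof. by have := hbil.1 a z 0 y; rewrite addr0 bform0l addr0. Qed.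

Lemma bformNl z y : b (- z) y = - b z y.
Proof. by rewrite -scaleN1r bformZl mulN1r. Qed.

Lemma bformDr y z1 z2 : b y (z1 + z2) = b y z1 + b y z2.
Proof. by have := hbil.2 1 y z1 z2; rewrite scale1r mul1r. Qed.

Lemma bform0r y : b y 0 = 0.
Proof. by have := bformDr y 0 0; rewrite addr0 -{1}[b y 0]addr0 => /addrI/esym. Qed.

Lemma bformZr a y z : b y (a *: z) = a * b y z.
Proof. by have := hbil.2 a y z 0; rewrite addr0 bform0r addr0. Qed.

Lemma bformBr y z1 z2 : b y (z1 - z2) = b y z1 - b y z2.
Proof. by rewrite bformDr -scaleN1r bformZr mulN1r. Qed.

Lemma orthE x z : (z \in orth b x) = (b x z == 0).
Proof. by []. Qed.

Lemma wedge_b_orth x y z : b x z = 0 -> wedge_b b x y z = b y z *: x.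
Proof. by move=> hxz; rewrite /wedge_b hxz scale0r subr0. Qed.

Lemma nondegenerate_exists_eq1 x :
  nondegenerate_bform b -> x != 0 -> exists w, b x w = 1.
Proof.
move=> hnd /eqP hx0; have [w0 hw0] : exists w0, b x w0 != 0.
  apply: NNPP => hn; apply: hx0; apply: hnd => y.
  by apply: NNPP => hy; apply: hn; exists y; apply/eqP.
by exists ((b x w0)^-1 *: w0); rewrite bformZr mulVf.
Qed.

Variable u : 'End(V).
Hypothesis hu : b_alternating b u.

Lemma alternating_skew z w : b z (u w) = - b w (u z).
Proof.
apply/eqP; rewrite -addr_eq0; have := hu (z + w).
by rewrite linearD bformDl !bformDr hu (hu w) add0r addr0 => /eqP.
Qed.

Section KernelVector.
Variables (x : V) (ux0 : u x = 0).

Lemma alternating_im_orth z : u z \in orth b x.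
Proof. by rewrite orthE alternating_skew ux0 bform0r oppr0. Qed.

Hypothesis hperp : forall z : V, z \in orth b x -> u z \in <[x]>%VS.

Lemma alternating_cube_eq0 z : u (u (u z)) = 0.
Proof.
have [c ->] := vlineP _ _ (hperp (alternating_im_orth z)).
by rewrite linearZ /= ux0 scaler0.
Qed.

Hypothesis hsym : symmetric_bform b.

Lemma alternating_eq_wedge_b w :
  b x w = 1 -> forall z : V, u z = wedge_b b x (- u w) z.
Proof.
move=> hw z; pose z' := z - b x z *: w.
have z'_orth : z' \in orth b x by rewrite orthE bformBr bformZr hw mulr1 subrr.
have [c uz'] := vlineP _ _ (hperp z'_orth).
have uzE : u z = c *: x + b x z *: u w.
  by rewrite -uz' -linearZ -linearD subrK.
have c_def : b (u w) z = - c.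
  rewrite hsym alternating_skew uzE bformDr !bformZr (hsym w) hw hu.
  by rewrite mulr1 mulr0 addr0.
by rewrite /wedge_b bformNl c_def opprK scalerN opprK.
Qed.

End KernelVector.
End BilinearForm.

Theorem corollary4p6 (F : fieldType) (V : vectType F) (b : V -> V -> F)
  (hchar : 2%N \in [pchar F])
  (hbil : bilinear_bform b) (hsym : symmetric_bform b) (hnd : nondegenerate_bform b)
  (x : V) (hx0 : x != 0) (hxx : b x x = 0)
  (u : 'End(V)) (hu : b_alternating b u) :
  (((u x = 0 /\ forall z : V, z \in orth b x -> u z \in <[x]>%VS)
     <-> (exists2 y : V, y \in orth b x & forall z : V, u z = wedge_b b x y z))
   /\ ((u x = 0 /\ forall z : V, z \in orth b x -> u z \in <[x]>%VS)
       -> nilpotent_end u)).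
Proof.
split; last first.
  by move=> [ux0 hperp]; exists 3%N => z; apply: alternating_cube_eq0 hperp z.
split=> [[ux0 hperp] | [y /eqP hxy uE]].
  have [w hw] := nondegenerate_exists_eq1 hbil hnd hx0.
  exists (- u w); first by rewrite -linearN; apply: alternating_im_orth.
  exact: alternating_eq_wedge_b.
split=> [|z /eqP hxz]; first by rewrite uE wedge_b_orth // hsym hxy scale0r.
by rewrite uE wedge_b_orth // memvZ ?memv_line.
Qed.
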